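(* Let $G=(\mathcal{S},\mathbb{A})$ be a finite directed acyclic graph with a unique initial state $\mathbf{s}_0$ (no incoming edges), and let $\mathcal{X}\subseteq\mathcal{S}$ be the set of terminal states. A complete trajectory is a path $\tau=(\mathbf{s}_0\to\mathbf{s}_1\to\dots\to\mathbf{s}_n)$ in $G$ with $\mathbf{s}_n=\mathbf{x}\in\mathcal{X}$. Let $R:\mathcal{X}\to\mathbb{R}_{\ge 0}$ be the extrinsic reward, let $r:\mathcal{X}\to\mathbb{R}_{\ge 0}$ be a state-based intrinsic reward on terminal states, and let $r(\mathbf{s}\to\mathbf{s}')\ge 0$ be edge-based intrinsic rewards on the edges of $G$. Let $Z>0$, let $F:\mathcal{S}\to\mathbb{R}_{>0}$ be a state flow, let $P_F(\cdot\mid\mathbf{s})$ be a forward policy (a probability distribution over the children of each non-terminal state $\mathbf{s}$), and let $P_B(\cdot\mid\mathbf{s}')$ be a backward policy (a probability distribution over the parents of each state $\mathbf{s}'\neq\mathbf{s}_0$). Define for each complete trajectory $\tau$ $$\mathcal{L}_{\rm GAFlowNet}(\tau)=\Big(\log\Big(Z\prod_{t=0}^{n-1}P_F(\mathbf{s}_{t+1}\mid\mathbf{s}_t)\Big)-\log\Big(\big[R(\mathbf{x})+r(\mathbf{x})\big]\prod_{t=0}^{n-1}\Big[P_B(\mathbf{s}_t\mid\mathbf{s}_{t+1})+\frac{r(\mathbf{s}_t\to\mathbf{s}_{t+1})}{F(\mathbf{s}_{t+1})}\Big]\Big)\Big)^2,$$ and let $P(\mathbf{x})=\sum_{\tau:\,\mathbf{s}_n=\mathbf{x}}\prod_{t=0}^{n-1}P_F(\mathbf{s}_{t+1}\mid\mathbf{s}_t)$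 be the probability that sampling a trajectory from $\mathbf{s}_0$ with the forward policy terminates at $\mathbf{x}$. Suppose that $\mathcal{L}_{\rm GAFlowNet}(\tau)=0$ for all complete trajectories $\tau$, and that $R(\mathbf{x})+r(\mathbf{x})>0$ for all $\mathbf{x}\in\mathcal{X}$. Then, when the edge-based intrinsic rewards $r(\mathbf{s}\to\mathbf{s}')$ converge to $0$ (with $F$ not vanishing): (1) $P(\mathbf{x})=\dfrac{R(\mathbf{x})+r(\mathbf{x})}{\sum_{\mathbf{x}'\in\mathcal{X}}[R(\mathbf{x}')+r(\mathbf{x}')]}$ for every $\mathbf{x}\in\mathcal{X}$; (2) if moreover the state-based intrinsic rewards $r(\mathbf{x})$ converge to $0$, then $P$ is an unbiased sampling distribution, i.e. $P(\mathbf{x})=R(\mathbf{x})/\sum_{\mathbf{x}'\in\mathcal{X}}R(\mathbf{x}')$.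
   Context: This is the setting of Generative Flow Networks (GFlowNets) with intermediate (intrinsic) rewards. The edge-based intrinsic rewards $r(\mathbf{s}\to\mathbf{s}')$ are extra flows attached to transitions, and the state-based intrinsic reward $r(\mathbf{x})$ augments the terminal reward $R(\mathbf{x})$. $Z$ plays the role of the (augmented) total flow. ''Unbiased'' means that terminal states are sampled with probability proportional to the extrinsic reward $R$. *)

From HB Require Import structures.
From mathcomp Require Import all_boot all_order all_algebra.
From mathcomp Require Import all_classical all_reals all_analysis.
Set Implicit Arguments. Unset Strict Implicit. Unset Printing Implicit Defensive.
Import Order.TTheory GRing.Theory Num.Theory.
Local Open Scope ring_scope.

Section GFN.
Variables (R : realType) (S : finType).

Definition is_terminal (E : rel S) (s : S) : bool := [forall s', ~~ E s s'].

Definition dag (E : rel S) : Prop := forall s t, E s t -> ~~ connect E t s.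

Definition traj_edges (s0 : S) (t : seq S) : seq (S * S) := zip (s0 :: t) t.

Definition complete_traj (E : rel S) (s0 : S) (t : seq S) : bool :=
  path E s0 t && is_terminal E (last s0 t).

(* PF s s' = P_F(s' | s). *)
Definition traj_PF (PF : S -> S -> R) (s0 : S) (t : seq S) : R :=
  \prod_(e <- traj_edges s0 t) PF e.1 e.2.

(* PB s' s = P_B(s | s'); re s s' = r(s -> s'). *)
Definition traj_back (PB re : S -> S -> R) (F : S -> R) (s0 : S) (t : seq S) : R :=
  \prod_(e <- traj_edges s0 t) (PB e.2 e.1 + re e.1 e.2 / F e.2).

Definition elog (x : R) : \bar R := if 0 < x then (ln x)%:E else -oo%E.

Definition gafn_loss (Z : R) (PF PB re : S -> S -> R) (F : S -> R)
    (Rw r : S -> R) (s0 : S) (t : seq S) : \bar R :=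
  let x := last s0 t in
  let d := (elog (Z * traj_PF PF s0 t)
            - elog ((Rw x + r x) * traj_back PB re F s0 t))%E in
  (d * d)%E.

(* Probability that forward sampling from s0 terminates at x: sum over all
   paths from s0 to x (in a DAG every path has fewer than #|S| edges). *)
Definition term_prob (E : rel S) (PF : S -> S -> R) (s0 x : S) : R :=
  \sum_(n < #|S|) \sum_(t : n.-tuple S | path E s0 t && (last s0 t == x))
     traj_PF PF s0 t.

End GFN.

From HB Require Import structures.
From mathcomp Require Import all_boot all_order all_algebra.
From mathcomp Require Import all_classical all_reals all_analysis.
From mathcomp Require Import ring.
Import Order.TTheory GRing.Theory Num.Theory.
Import numFieldNormedType.Exports.
Local Open Scope ring_scope.
Set Implicit Arguments. Unset Strict Implicit. Unset Printing Implicit Defensive.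

(* Zero loss on a complete trajectory tau ending at x says
   Z P_F(tau) = (R(x) + r(x)) Q(tau), where Q multiplies the augmented backward
   weights P_B(s_t | s_{t+1}) + r(s_t -> s_{t+1}) / F(s_{t+1}).  Summing over the
   paths to x gives Z P(x) = (R(x) + r(x)) B(x), with B(x) the total Q-weight of
   the paths from s0 to x.  For the genuine backward policy this total is 1 at
   every state, and Q is a bounded perturbation of it, so B(x) -> 1 as the edge
   rewards vanish.  As P sums to 1 over terminal states, Z = sum_x (R + r) B, so
   P(x) equals (R(x) + r(x)) / sum (R + r) up to a factor tending to 1. *)

Section PathSums.
Variables (R : realType) (S : finType) (E : rel S) (s0 : S).

Lemma big_tuple_rcons n (P : pred (n.+1.-tuple S)) (f : n.+1.-tuple S -> R) :
  \sum_(u | P u) f u =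
  \sum_(p : n.-tuple S * S | P [tuple of rcons p.1 p.2]) f [tuple of rcons p.1 p.2].
Proof.
apply: reindex.
exists (fun u => ([tuple of belast (thead u) (behead u)], last (thead u) (behead u))).
- move=> [t y] _ /=.
  have -> : thead [tuple of rcons t y] = head y t.
    by rewrite /thead (tnth_nth y) /=; case: (tval t).
  congr pair; last by case: (tval t) => //= a s; rewrite last_rcons.
  by apply: val_inj => /=; case: (tval t) => //= a s; rewrite belast_rcons.
- move=> [[|a s] hs] _; apply: val_inj => //=.
  by rewrite /thead (tnth_nth a) /= -lastI.
Qed.

Lemma traj_edges_rcons (a : S) t y :
  traj_edges a (rcons t y) = rcons (traj_edges a t) (last a t, y).
Proof. by elim: t a => [|b t IH] a //=; rewrite /traj_edges /= -/(traj_edges b _) IH. Qed.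

Lemma traj_PF_rcons (g : S -> S -> R) (a : S) t y :
  traj_PF g a (rcons t y) = traj_PF g a t * g (last a t) y.
Proof. by rewrite /traj_PF traj_edges_rcons big_rcons. Qed.

Lemma path_traj_edges (a : S) t e : path E a t -> e \in traj_edges a t -> E e.1 e.2.
Proof.
elim: t a => [|b t IH] a //= /andP[Eab pt].
by rewrite /traj_edges /= inE => /orP[/eqP-> // | /IH]; apply.
Qed.

Definition term_prob_len (g : S -> S -> R) n x :=
  \sum_(t : n.-tuple S | path E s0 t && (last s0 t == x)) traj_PF g s0 t.

Lemma term_prob_len0 g x : term_prob_len g 0 x = (x == s0)%:R.
Proof.
rewrite /term_prob_len big_mkcond (big_pred1 [tuple]) => [|t]; last first.
  by rewrite [t]tuple0; apply/esym/eqP.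
by rewrite /= eq_sym; case: (x == s0); rewrite // /traj_PF big_nil.
Qed.

Lemma term_prob_lenS g n x :
  term_prob_len g n.+1 x = \sum_(y | E y x) term_prob_len g n y * g y x.
Proof.
rewrite /term_prob_len big_tuple_rcons /=.
under eq_bigl do rewrite rcons_path last_rcons.
under eq_bigr do rewrite traj_PF_rcons.
transitivity (\sum_(t : n.-tuple S | path E s0 t && E (last s0 t) x)
    \sum_(y | y == x) traj_PF g s0 t * g (last s0 t) y).
  rewrite pair_big /=; apply: eq_big => [[t y]|[t y]] //=.
  by case: eqP => [->|]; rewrite ?andbT ?andbF.
rewrite (eq_bigr (fun t : n.-tuple S => traj_PF g s0 t * g (last s0 t) x)); last first.
  by move=> t _; rewrite (big_pred1 x).
rewrite (partition_big (fun t : n.-tuple S => last s0 t) (fun y => E y x)) /=;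
  last by move=> t /andP[].
apply: eq_bigr => y Eyx; rewrite big_distrl; apply: eq_big => t.
  by case: eqP => [->|]; rewrite ?Eyx ?andbT ?andbF.
by move=> /andP[_ /eqP->].
Qed.

Hypothesis E_dag : dag E.

Lemma dag_path_uniq x p : path E x p -> uniq (x :: p).
Proof.
elim: p x => [|y p IH] x // /andP[Exy pp]; rewrite cons_uniq IH // andbT.
by apply/negP => /(path_connect pp); apply/negP/E_dag.
Qed.

Lemma term_prob_len_card g x : term_prob_len g #|S| x = 0.
Proof.
rewrite /term_prob_len big_pred0 // => t; apply/negP => /andP[/dag_path_uniq + _].
move=> /card_uniqP; have := max_card (mem (s0 :: t)).
by rewrite /= size_tuple => + eq_card; rewrite eq_card ltnn.
Qed.

Lemma term_prob_rec (g : S -> S -> R) x :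
  term_prob E g s0 x = (x == s0)%:R + \sum_(y | E y x) term_prob E g s0 y * g y x.
Proof.
have -> : term_prob E g s0 x = \sum_(n < #|S|.+1) term_prob_len g n x.
  by rewrite big_ord_recr /= term_prob_len_card addr0.
rewrite big_ord_recl term_prob_len0; congr (_ + _).
under eq_bigr do rewrite term_prob_lenS.
by rewrite exchange_big; apply: eq_bigr => y _; rewrite big_distrl.
Qed.

Lemma sum_term_prob_terminal (g : S -> S -> R) :
  (forall s, ~~ is_terminal E s -> \sum_(s' | E s s') g s s' = 1) ->
  \sum_(x | is_terminal E x) term_prob E g s0 x = 1.
Proof.
move=> g_policy.
have outflow y : \sum_(s | E y s) g y s = (~~ is_terminal E y)%:R.
  case: (boolP (is_terminal E y)) => [/forallP y_term | /g_policy //].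
  by rewrite big_pred0 // => s; apply/negbTE/y_term.
have : \sum_x term_prob E g s0 x =
       1 + \sum_(y | ~~ is_terminal E y) term_prob E g s0 y.
  under eq_bigr do rewrite term_prob_rec.
  rewrite big_split /= (bigD1 s0) //= eqxx big1 ?addr0 => [|s /negbTE-> //].
  congr (_ + _); rewrite (exchange_big_dep xpredT) //= [RHS]big_mkcond /=.
  apply: eq_bigr => y _; rewrite -big_distrr outflow /=.
  by case: ifP; rewrite ?mulr1 ?mulr0.
by rewrite (bigID (is_terminal E)) /= => /(addIr _).
Qed.

Lemma term_prob_reversed_policy (g : S -> S -> R) :
  (forall s, ~~ E s s0) ->
  (forall s', s' != s0 -> \sum_(s | E s s') g s' s = 1) ->
  forall x, term_prob E (fun s s' => g s' s) s0 x = 1.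
Proof.
move=> s0_source g_policy x.
have [n] := ubnP #|[set z | connect E z x]|; elim: n x => // n IH x.
rewrite ltnS => ancestors_x; rewrite term_prob_rec.
have [-> | x_ne_s0] := eqVneq x s0.
  by rewrite big_pred0 ?addr0 // => y; apply/negbTE.
rewrite add0r -[RHS](g_policy x x_ne_s0); apply: eq_bigr => y Eyx.
rewrite IH ?mul1r //; apply: leq_trans ancestors_x; apply: proper_card.
apply/properP; split.
  by apply/fintype.subsetP => z; rewrite !inE => /connect_trans; apply; apply: connect1.
by exists x; rewrite inE ?connect0 //; apply: E_dag.
Qed.

End PathSums.

Local Open Scope classical_set_scope.

Section SequenceLimits.
Variable R : realType.
Implicit Types u v : nat -> R.

Lemma cvg_sumr (I : finType) (P : pred I) (u : I -> nat -> R) (l : I -> R) :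
  (forall i, P i -> u i @ \oo --> l i) ->
  (fun k => \sum_(i | P i) u i k) @ \oo --> \sum_(i | P i) l i.
Proof. by move=> u_cvg; apply: cvg_big => //; apply: add_continuous. Qed.

Lemma cvg_sumr0 (I : finType) (P : pred I) (u : I -> nat -> R) :
  (forall i, P i -> u i @ \oo --> (0 : R)) ->
  (fun k => \sum_(i | P i) u i k) @ \oo --> (0 : R).
Proof. by move/cvg_sumr; rewrite big1. Qed.

Lemma cvg0_mul_bounded u v (M : R) :
  (forall k, `|u k| <= M) -> v @ \oo --> (0 : R) ->
  (fun k => u k * v k) @ \oo --> (0 : R).
Proof.
move=> u_le v0; apply/norm_cvg0P.
apply: (@squeeze_cvgr _ _ _ _ (fun _ => 0) (fun k => M * `|v k|)).
- by apply: nearW => k; rewrite normr_ge0 normrM ler_wpM2r.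
- exact: cvg_cst.
- by rewrite -(mulr0 M); apply: cvgMl_tmp; apply/norm_cvg0P.
Qed.

Lemma cvg0_divr_lbounded u v (c : R) :
  0 < c -> (forall k, c <= v k) -> u @ \oo --> (0 : R) ->
  (fun k => u k / v k) @ \oo --> (0 : R).
Proof.
move=> c_gt0 c_le u0.
have v_gt0 k : 0 < v k by apply: lt_le_trans (c_le k).
have -> : (fun k => u k / v k) = (fun k => c / v k * (u k / c)).
  by apply/funext => k; field; rewrite !gt_eqF.
apply: (cvg0_mul_bounded (M := 1)).
  move=> k; have v_gt0k := v_gt0 k.
  by rewrite ger0_norm ?divr_ge0 ?(ltW c_gt0) ?(ltW v_gt0k) // ler_pdivrMr ?mul1r.
by move/(cvgMr_tmp (b := c^-1)): u0; rewrite mul0r.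
Qed.

Lemma cvg_prod_diff0 (T : eqType) (l : seq T) (g h : nat -> T -> R) :
  (forall e, e \in l -> forall k, `|h k e| <= 1) ->
  (forall e, e \in l -> (fun k => g k e - h k e) @ \oo --> (0 : R)) ->
  (fun k => \prod_(e <- l) g k e - \prod_(e <- l) h k e) @ \oo --> (0 : R).
Proof.
elim: l => [|e l IH] h_le1 gh0.
  by under eq_fun do rewrite !big_nil subrr; apply: cvg_cst.
have [he hl] : e \in e :: l /\ {subset l <= e :: l}.
  by split=> [|e' e'l]; rewrite inE ?eqxx ?e'l ?orbT.
set D := fun k => \prod_(e0 <- l) g k e0 - \prod_(e0 <- l) h k e0.
have D0 : D @ \oo --> (0 : R).
  by apply: IH => e' /hl; [apply: h_le1 | apply: gh0].
have -> : (fun k => \prod_(e0 <- e :: l) g k e0 - \prod_(e0 <- e :: l) h k e0) =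
    (fun k => h k e * D k + (g k e - h k e) * D k +
              \prod_(e0 <- l) h k e0 * (g k e - h k e)).
  by apply/funext => k; rewrite !big_cons /D; ring.
rewrite -[0 : R]addr0 -{1}[0 : R]addr0.
apply: cvgD; [apply: cvgD | ].
- exact: cvg0_mul_bounded (h_le1 e he) D0.
- by rewrite -(mulr0 0); apply: cvgM; [apply: gh0 | ].
- apply: (cvg0_mul_bounded (M := 1)) (gh0 e he) => k.
  by rewrite normr_prod big_seq prodr_ile1 // => e' /hl/h_le1 ->; rewrite normr_ge0.
Qed.

Lemma cvg_balanced_normalized (I : finType) (P : pred I) (Z : nat -> R)
    (a B T : nat -> I -> R) x :
  P x -> (forall k, Z k != 0) -> (forall k y, P y -> 0 < a k y) ->
  (forall k y, P y -> Z k * T k y = a k y * B k y) ->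
  (forall k, \sum_(y | P y) T k y = 1) ->
  (forall y, P y -> B^~ y @ \oo --> (1 : R)) ->
  (fun k => T k x - a k x / \sum_(y | P y) a k y) @ \oo --> (0 : R).
Proof.
move=> Px Z_neq0 a_gt0 balance T_sum1 B1.
pose A k := \sum_(y | P y) a k y.
pose w k y := a k y / A k.
pose D k := \sum_(y | P y) w k y * B k y.
have A_gt0 k : 0 < A k.
  rewrite /A (bigD1 x) //= ltr_pwDl ?a_gt0 ?sumr_ge0 // => y /andP[Py _].
  exact/ltW/a_gt0.
have w_le1 k y : P y -> `|w k y| <= 1.
  move=> Py; have a_le_A : a k y <= A k.
    rewrite /A (bigD1 y) //= lerDl sumr_ge0 // => z /andP[Pz _]; exact/ltW/a_gt0.
  rewrite ger0_norm ?divr_ge0 ?(ltW (a_gt0 k y Py)) ?(ltW (A_gt0 k)) //.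
  by rewrite ler_pdivrMr ?mul1r.
have ZE k : Z k = A k * D k.
  rewrite -[Z k]mulr1 -(T_sum1 k) !mulr_sumr; apply: eq_bigr => y Py.
  by rewrite balance // /w mulrA mulrCA divff ?mulr1 // gt_eqF.
have TE k : T k x - w k x = w k x * (B k x / D k - 1).
  have D_neq0 : D k != 0 by apply: contra (Z_neq0 k); rewrite ZE => /eqP->; rewrite mulr0.
  have A_neq0 : A k != 0 by rewrite gt_eqF.
  have -> : T k x = a k x * B k x / Z k.
    by rewrite -balance // mulrC mulrA mulVf ?mul1r.
  by rewrite ZE /w; field; rewrite A_neq0 D_neq0.
have D1 : D @ \oo --> (1 : R).
  have w_sum1 k : \sum_(y | P y) w k y = 1.
    by rewrite /w -mulr_suml divff //; apply: lt0r_neq0 (A_gt0 k).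
  apply/subr_cvg0.
  have -> : (fun k => D k - 1) = (fun k => \sum_(y | P y) w k y * (B k y - 1)).
    apply/funext => k; rewrite /D -[in X in _ - X](w_sum1 k) -sumrB.
    by apply: eq_bigr => y _; rewrite mulrBr mulr1.
  apply: cvg_sumr0 => y Py.
  exact: (cvg0_mul_bounded (fun k => w_le1 k y Py) (proj2 (subr_cvg0 _ _) (B1 y Py))).
have ratio1 : (fun k => B k x / D k) @ \oo --> (1 : R).
  by rewrite -[1 : R]divr1; apply: cvgM; [apply: B1 | apply: cvgV; rewrite ?oner_neq0].
rewrite (funext TE).
exact: (cvg0_mul_bounded (fun k => w_le1 k x Px) (proj2 (subr_cvg0 _ _) ratio1)).
Qed.

End SequenceLimits.

Lemma normr_le1_of_sum1 (R : numDomainType) (I : finType) (P : pred I) (f : I -> R) i :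
  (forall j, P j -> 0 <= f j) -> \sum_(j | P j) f j = 1 -> P i -> `|f i| <= 1.
Proof.
move=> f_ge0 f_sum1 Pi; rewrite ger0_norm ?f_ge0 // -f_sum1 (bigD1 i) //= lerDl.
by apply: sumr_ge0 => j /andP[Pj _]; apply: f_ge0.
Qed.

Section ZeroLoss.
Variables (R : realType) (S : finType) (E : rel S) (s0 : S).

Definition back_weight (PB re : S -> S -> R) (F : S -> R) (s s' : S) : R :=
  PB s' s + re s s' / F s'.

Lemma gafn_loss_eq0_balance Z (PF PB re : S -> S -> R) F (Rw r : S -> R) t :
  gafn_loss Z PF PB re F Rw r s0 t = 0%E ->
  Z * traj_PF PF s0 t = (Rw (last s0 t) + r (last s0 t)) * traj_back PB re F s0 t.
Proof.
rewrite /gafn_loss /= => /eqP; rewrite mule_eq0 orbb => /eqP.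
rewrite /elog; case: ifP => pos_l; case: ifP => pos_r //=.
move=> /eqP; rewrite -EFinB eqe subr_eq0 => /eqP.
by apply: ln_inj; rewrite posrE.
Qed.

Lemma term_prob_balance Z (PF PB re : S -> S -> R) F (Rw r : S -> R) x :
  (forall t, complete_traj E s0 t -> gafn_loss Z PF PB re F Rw r s0 t = 0%E) ->
  is_terminal E x ->
  Z * term_prob E PF s0 x = (Rw x + r x) * term_prob E (back_weight PB re F) s0 x.
Proof.
move=> loss0 x_term; rewrite /term_prob !mulr_sumr; apply: eq_bigr => n _.
rewrite !mulr_sumr; apply: eq_bigr => t /andP[pt /eqP last_t].
rewrite -last_t; apply: gafn_loss_eq0_balance; apply: loss0.
by rewrite /complete_traj pt last_t.
Qed.

Lemma cvg_term_prob_diff0 (g h : nat -> S -> S -> R) x :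
  (forall k s s', E s s' -> `|h k s s'| <= 1) ->
  (forall s s', E s s' -> (fun k => g k s s' - h k s s') @ \oo --> (0 : R)) ->
  (fun k => term_prob E (g k) s0 x - term_prob E (h k) s0 x) @ \oo --> (0 : R).
Proof.
move=> h_le1 gh0; under eq_fun do rewrite /term_prob -sumrB.
apply: cvg_sumr0 => n _; under eq_fun do rewrite -sumrB.
apply: cvg_sumr0 => t /andP[pt _].
apply: cvg_prod_diff0 => e /(path_traj_edges pt) Ee; last exact: gh0.
by move=> k; apply: h_le1.
Qed.

Lemma cvg_term_prob_back_weight (PB re : nat -> S -> S -> R) (F : nat -> S -> R) c y :
  dag E -> (forall s, ~~ E s s0) ->
  (forall k s', s' != s0 ->
     (forall s, E s s' -> 0 <= PB k s' s) /\ \sum_(s | E s s') PB k s' s = 1) ->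
  (forall s s', E s s' -> (fun k => re k s s') @ \oo --> (0 : R)) ->
  0 < c -> (forall k s, c <= F k s) ->
  (fun k => term_prob E (back_weight (PB k) (re k) (F k)) s0 y) @ \oo --> (1 : R).
Proof.
move=> E_dag s0_source PB_policy re0 c_gt0 c_le; apply/subr_cvg0.
have PB_paths1 k : term_prob E (fun s s' => PB k s' s) s0 y = 1.
  by apply: term_prob_reversed_policy => // s' /(PB_policy k) [].
under eq_fun => k do rewrite -[X in _ - X](PB_paths1 k).
apply: cvg_term_prob_diff0 => [k s s' Ess' | s s' Ess'].
  have s'_ne_s0 : s' != s0 by apply: contraTneq Ess' => ->.
  have [PB_ge0 PB_sum1] := PB_policy k s' s'_ne_s0.
  exact: normr_le1_of_sum1 PB_ge0 PB_sum1 Ess'.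
under eq_fun do rewrite /back_weight addrAC subrr add0r.
exact: cvg0_divr_lbounded c_gt0 (c_le^~ s') (re0 s s' Ess').
Qed.

End ZeroLoss.

Unset Implicit Arguments. Set Strict Implicit.

Theorem theorem1 (R : realType) (S : finType) (E : rel S) (s0 : S)
  (Rw : S -> R)
  (r : nat -> S -> R) (re : nat -> S -> S -> R)
  (Z : nat -> R) (F : nat -> S -> R) (PF PB : nat -> S -> S -> R) :
  dag E ->
  (forall s, ~~ E s s0) ->
  (forall s, s != s0 -> exists s', E s' s) ->
  (forall x, is_terminal E x -> 0 <= Rw x) ->
  (forall k x, is_terminal E x -> 0 <= r k x) ->
  (forall k s s', E s s' -> 0 <= re k s s') ->
  (forall k, 0 < Z k) ->
  (forall k s, 0 < F k s) ->
  (forall k s, ~~ is_terminal E s ->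
     (forall s', E s s' -> 0 <= PF k s s') /\ \sum_(s' | E s s') PF k s s' = 1) ->
  (forall k s', s' != s0 ->
     (forall s, E s s' -> 0 <= PB k s' s) /\ \sum_(s | E s s') PB k s' s = 1) ->
  (forall k (t : seq S), complete_traj E s0 t ->
     gafn_loss (Z k) (PF k) (PB k) (re k) (F k) Rw (r k) s0 t = 0%E) ->
  (forall k x, is_terminal E x -> 0 < Rw x + r k x) ->
  (* edge-based intrinsic rewards converge to 0, with F not vanishing *)
  (forall s s', E s s' -> (fun k => re k s s') @ \oo --> (0 : R)) ->
  (exists2 c : R, 0 < c & forall k s, c <= F k s) ->
  (* (1) *)
  (forall x, is_terminal E x ->
     (fun k => term_prob E (PF k) s0 x
               - (Rw x + r k x) / \sum_(x' | is_terminal E x') (Rw x' + r k x'))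
       @ \oo --> (0 : R)) /\
  (* (2) *)
  ((forall x, is_terminal E x -> (fun k => r k x) @ \oo --> (0 : R)) ->
   0 < \sum_(x' | is_terminal E x') Rw x' ->
   forall x, is_terminal E x ->
     (fun k => term_prob E (PF k) s0 x)
       @ \oo --> (Rw x / \sum_(x' | is_terminal E x') Rw x')).
Proof.
move=> E_dag s0_source _ _ _ _ Z_gt0 _ PF_policy PB_policy loss0 a_gt0 re0 [c c_gt0 c_le].
pose B k := term_prob E (back_weight (PB k) (re k) (F k)) s0.
have B1 y : (fun k => B k y) @ \oo --> (1 : R).
  exact: cvg_term_prob_back_weight E_dag s0_source PB_policy re0 c_gt0 c_le.
have Z_neq0 k : Z k != 0 := lt0r_neq0 (Z_gt0 k).
have balance k y : is_terminal E y ->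
    Z k * term_prob E (PF k) s0 y = (Rw y + r k y) * B k y.
  exact: term_prob_balance (loss0 k).
have PF_sum1 k : \sum_(y | is_terminal E y) term_prob E (PF k) s0 y = 1.
  by apply: sum_term_prob_terminal => // s /(PF_policy k) [].
have part1 x (x_term : is_terminal E x) :=
  cvg_balanced_normalized x_term Z_neq0 a_gt0 balance PF_sum1 (fun y _ => B1 y).
split=> [|r0 Rw_sum_gt0 x x_term]; first exact: part1.
have a_cvg y : is_terminal E y -> (fun k => Rw y + r k y) @ \oo --> Rw y.
  move=> y_term; rewrite -[X in _ --> X]addr0.
  by apply: cvgD; [apply: cvg_cst | apply: r0].
apply: cvg_sub0 (part1 x x_term) _; apply: cvgM; first exact: a_cvg.
by apply: cvgV; [apply: lt0r_neq0 | apply: cvg_sumr].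
Qed.
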